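(* Let $n \ge 1$ be an integer. Let $\mathcal{A}_3(n)$ be the set of all $3 \times n$ matrices $M=(m_{j,i})$ with entries in $\{0,1,2\}$ such that all three rows of $M$ have the same valuation, i.e. $\sum_{i=1}^{n} m_{1,i}2^{i-1} = \sum_{i=1}^{n} m_{2,i}2^{i-1} = \sum_{i=1}^{n} m_{3,i}2^{i-1}$. Let $\mathcal{S}(n)$ be the set of words $w_1w_2\cdots w_n$ of length $n$ over the alphabet $\{1,2,3,4,5,6,7\}$ whose last letter $w_n$ lies in $\{1,2,3\}$. Then there exists a bijection between $\mathcal{A}_3(n)$ and $\mathcal{S}(n)$.
   Context: For a vector $a=(a_1,\dots,a_n)\in\{0,1,2\}^n$, its valuation is $v(a)=\sum_{i=1}^n a_i 2^{i-1}$. The set $\mathcal{A}_3(n)$ consists of $3\times n$ matrices with entries in $\{0,1,2\}$ whose three rows, viewed as vectors in $\{0,1,2\}^n$, all have equal valuation. Equivalently, $|\mathcal{A}_3(n)|=\sum_k a(n,k)^3$ where $\sum_{k=0}^{2(2^n-1)} a(n,k)x^k=\prod_{i=0}^{n-1}(1+x^{2^i}+x^{2\cdot 2^i})$ (the $n$-th row of Stern's diatomic array). *)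

From mathcomp Require Import all_boot all_order all_algebra.
Set Implicit Arguments. Unset Strict Implicit. Unset Printing Implicit Defensive.

(* Entries in {0,1,2} are encoded as 'I_3 (value = the entry).
   Column i : 'I_n corresponds to the paper's position i+1, with weight 2^i. *)
Definition valuation (n : nat) (a : 'I_n -> 'I_3) : nat :=
  \sum_(i < n) (a i : nat) * 2 ^ i.

Definition A3 (n : nat) : pred 'M['I_3]_(3, n) :=
  fun M => (valuation (fun i => M (inord 0 : 'I_3) i) == valuation (fun i => M (inord 1 : 'I_3) i))
        && (valuation (fun i => M (inord 1 : 'I_3) i) == valuation (fun i => M (inord 2 : 'I_3) i)).

(* S(n): words of length n over {1,...,7}; letter k+1 is encoded as k : 'I_7.
   Position i : 'I_n is the paper's w_{i+1}; the last letter w_n (i = n-1)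
   must lie in {1,2,3}, i.e. its code is < 3. *)
Definition Swords (n : nat) : pred {ffun 'I_n -> 'I_7} :=
  fun w => [forall i : 'I_n, (val i == n.-1) ==> (w i < 3)].

From mathcomp Require Import all_boot all_order all_algebra zify.
Set Implicit Arguments. Unset Strict Implicit. Unset Printing Implicit Defensive.
Import GRing.Theory.

(* Write the rows of a matrix of A_3(n) as x + 2a, y + 2b, z + 2c, where x, y, z
   are the entries of the first column.  The pair of valuation differences
   (d1, d2) of the matrix and the pair (e1, e2) of the remaining columns satisfy
   d1 = (x - y) + 2 e1 and d2 = (y - z) + 2 e2.  So the number of triples of rows
   with differences (d1, d2) obeys a recurrence in n, and starting from (0, 0)
   it only visits the seven pairs with d1, d2, d1 + d2 in {-1, 0, 1}.  On these
   the counts are 3 * 7^(n-1) at (0, 0) and 2 * 7^(n-1) elsewhere, by induction.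
   Since |S(n)| = 3 * 7^(n-1) as well, A_3(n) and S(n) are in bijection. *)

Section FfunCons.
Variable T : finType.

Definition fcons n (x : T) (t : {ffun 'I_n -> T}) : {ffun 'I_n.+1 -> T} :=
  [ffun i => if unlift ord0 i is Some j then t j else x].

Lemma fcons_ord0 n x (t : {ffun 'I_n -> T}) : fcons x t ord0 = x.
Proof. by rewrite ffunE unlift_none. Qed.

Lemma fcons_lift n x (t : {ffun 'I_n -> T}) j : fcons x t (lift ord0 j) = t j.
Proof. by rewrite ffunE liftK. Qed.

Lemma big_ffun_recl (R : Type) (idx : R) (op : Monoid.com_law idx) n
    (F : {ffun 'I_n.+1 -> T} -> R) :
  \big[op/idx]_a F a = \big[op/idx]_x \big[op/idx]_(t : {ffun 'I_n -> T}) F (fcons x t).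
Proof.
rewrite pair_big (reindex (fun p => fcons p.1 p.2)) //=.
exists (fun a => (a ord0, [ffun j => a (lift ord0 j)])) => [[x t] _ | a _] /=.
  by congr (_, _); [rewrite fcons_ord0 | apply/ffunP => j; rewrite ffunE fcons_lift].
apply/ffunP => i; rewrite ffunE; case: unliftP => [j ->|->] //.
by rewrite ffunE.
Qed.

End FfunCons.

Lemma valuation_fcons n (x : 'I_3) (t : {ffun 'I_n -> 'I_3}) :
  valuation (fcons x t) = x + 2 * valuation t.
Proof.
rewrite /valuation big_ord_recl fcons_ord0 muln1 big_distrr /=.
by congr (_ + _); apply: eq_bigr => i _; rewrite fcons_lift expnS mulnCA.
Qed.

Lemma valuation_ord0 (t : {ffun 'I_0 -> 'I_3}) : valuation t = 0.
Proof. exact: big_ord0. Qed.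

Section DiffCount.
Local Open Scope ring_scope.

Definition diff (m n : nat) : int := m%:Z - n%:Z.

Lemma diff_double_add x y m n : diff (x + 2 * m) (y + 2 * n) = diff x y + 2 * diff m n.
Proof. rewrite /diff; lia. Qed.

Lemma eq_add_double (c d k : int) :
  (c + 2 * k == d) = (2 %| d - c)%Z && (k == (d - c) %/ 2)%Z.
Proof.
apply/eqP/andP => [<- | [/divzK e /eqP ->]].
  by rewrite addrAC subrr add0r mulrC dvdz_mull ?mulzK.
by rewrite mulrC e addrC subrK.
Qed.

Definition diff_count n (d1 d2 : int) : nat :=
  \sum_(a : {ffun 'I_n -> 'I_3}) \sum_(b : {ffun 'I_n -> 'I_3}) \sum_(c : {ffun 'I_n -> 'I_3})
    (diff (valuation a) (valuation b) == d1) && (diff (valuation b) (valuation c) == d2).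

Lemma diff_count0 d1 d2 : diff_count 0 d1 d2 = (d1 == 0) && (d2 == 0).
Proof.
rewrite /diff_count.
under eq_bigr do under eq_bigr do under eq_bigr do rewrite !valuation_ord0 /diff subrr.
by rewrite !sum_nat_const card_ffun !card_ord !mul1n ![0 == _]eq_sym.
Qed.

Lemma diff_count_shift n (c1 c2 d1 d2 : int) :
  (\sum_(a : {ffun 'I_n -> 'I_3}) \sum_(b : {ffun 'I_n -> 'I_3}) \sum_(c : {ffun 'I_n -> 'I_3})
     (c1 + 2 * diff (valuation a) (valuation b) == d1)%R
       && (c2 + 2 * diff (valuation b) (valuation c) == d2)%R)%N =
  if (2 %| d1 - c1)%Z && (2 %| d2 - c2)%Z
  then diff_count n ((d1 - c1) %/ 2)%Z ((d2 - c2) %/ 2)%Z else 0%N.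
Proof.
under eq_bigr do under eq_bigr do under eq_bigr do rewrite !eq_add_double.
case: (2 %| d1 - c1)%Z; case: (2 %| d2 - c2)%Z => //=.
all: rewrite big1 // => a _; rewrite big1 // => b _; rewrite big1 // => c _.
all: by rewrite andbF.
Qed.

Lemma diff_countS n d1 d2 :
  diff_count n.+1 d1 d2 =
  (\sum_(x < 3) \sum_(y < 3) \sum_(z < 3)
     if (2 %| (d1 - diff x y)%R)%Z && (2 %| (d2 - diff y z)%R)%Z
     then diff_count n ((d1 - diff x y)%R %/ 2)%Z ((d2 - diff y z)%R %/ 2)%Z
     else 0)%N.
Proof.
rewrite /diff_count big_ffun_recl.
under eq_bigr => x _ do under eq_bigr => a _ do rewrite big_ffun_recl.
under eq_bigr => x _ do under eq_bigr => a _ do under eq_bigr => y _ do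
  under eq_bigr => b _ do rewrite big_ffun_recl.
under eq_bigr => x _ do rewrite exchange_big.
under eq_bigr => x _ do under eq_bigr => y _ do under eq_bigr => a _ do rewrite exchange_big.
under eq_bigr => x _ do under eq_bigr => y _ do rewrite exchange_big.
apply: eq_bigr => x _; apply: eq_bigr => y _; apply: eq_bigr => z _.
rewrite -diff_count_shift; apply: eq_bigr => a _; apply: eq_bigr => b _; apply: eq_bigr => c _.
by rewrite !valuation_fcons !diff_double_add.
Qed.

Lemma diff_count_hexagon n :
  diff_count n.+1 0 0 = (3 * 7 ^ n)%N /\
  diff_count n.+1 1 0 = (2 * 7 ^ n)%N /\ diff_count n.+1 (-1) 0 = (2 * 7 ^ n)%N /\
  diff_count n.+1 0 1 = (2 * 7 ^ n)%N /\ diff_count n.+1 0 (-1) = (2 * 7 ^ n)%N /\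
  diff_count n.+1 1 (-1) = (2 * 7 ^ n)%N /\ diff_count n.+1 (-1) 1 = (2 * 7 ^ n)%N.
Proof.
elim: n => [|n [h00 [h10 [h_10 [h01 [h0_1 [h1_1 h_11]]]]]]];
  (repeat split); rewrite diff_countS !big_ord_recr !big_ord0 /=.
all: try by rewrite !diff_count0.
(* The arguments left by diff_countS are closed terms such as
   ((0 - diff 0 2) %/ 2)%Z, which the hypotheses match up to computation. *)
all: by rewrite ?h00 ?h10 ?h_10 ?h01 ?h0_1 ?h1_1 ?h_11 expnS; lia.
Qed.

Definition rows3 n (abc : {ffun 'I_n -> 'I_3} * ({ffun 'I_n -> 'I_3} * {ffun 'I_n -> 'I_3}))
  : 'M['I_3]_(3, n) :=
  \matrix_(r, i) tnth [tuple abc.1; abc.2.1; abc.2.2] r i.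

Lemma rows3_bij n : bijective (@rows3 n).
Proof.
exists (fun M : 'M['I_3]_(3, n) =>
  ([ffun i => M (inord 0) i], ([ffun i => M (inord 1) i], [ffun i => M (inord 2) i]))).
  move=> [a [b c]]; congr (_, (_, _)); apply/ffunP => i;
  by rewrite !ffunE mxE (tnth_nth a) inordK.
move=> M; apply/matrixP => r i; rewrite mxE.
case: r => [[|[|[|r]]] hr] //=; rewrite ffunE; congr (M _ i).
all: exact/val_inj/inordK.
Qed.

Lemma A3_rows3 n abc :
  A3 (@rows3 n abc) =
  (valuation abc.1 == valuation abc.2.1) && (valuation abc.2.1 == valuation abc.2.2).
Proof.
have row_valuation r : valuation (fun i => rows3 abc r i) =
    valuation (tnth [tuple abc.1; abc.2.1; abc.2.2] r).
  by apply: eq_bigr => i _; rewrite mxE.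
by rewrite /A3 !row_valuation !(tnth_nth abc.1) !inordK.
Qed.

Lemma card_A3 n : #|[pred M | @A3 n M]| = diff_count n 0 0.
Proof.
rewrite -sum1_card big_mkcond /= (reindex _ (onW_bij _ (@rows3_bij n))) /diff_count.
under [RHS]eq_bigr do rewrite pair_big; rewrite pair_big /=.
by apply: eq_bigr => -[a [b c]] _; rewrite inE A3_rows3 /diff !subr_eq0 !eqz_nat.
Qed.

End DiffCount.

Lemma card_Swords n : #|[pred w | @Swords n.+1 w]| = 3 * 7 ^ n.
Proof.
pose F (i : 'I_n.+1) := if val i == n then [pred k : 'I_7 | k < 3] else predT.
have -> : #|[pred w | @Swords n.+1 w]| = #|family F|.
  apply: eq_card => w; rewrite !inE; apply: eq_forallb => i.
  by rewrite /F /=; case: (val i == n).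
rewrite card_family foldrE big_map big_enum /= big_ord_recr /= /F eqxx mulnC.
congr (_ * _).
  by rewrite -sum1_card big_mkcond /= !big_ord_recr big_ord0.
rewrite -[in RHS](card_ord n) -prod_nat_const; apply: eq_bigr => i _.
by rewrite /= (ltn_eqF (ltn_ord i)) card_ord.
Qed.

Lemma card_eq_bij (T1 T2 : finType) : #|T1| = #|T2| -> exists f : T1 -> T2, bijective f.
Proof.
move=> eqT; exists (fun x => enum_val (cast_ord eqT (enum_rank x))).
exists (fun y => enum_val (cast_ord (esym eqT) (enum_rank y))) => [x|y].
  by rewrite enum_valK cast_ordK enum_rankK.
by rewrite enum_valK cast_ordKV enum_rankK.
Qed.

Theorem mainTheorem1 (n : nat) (hn : 1 <= n) :
  exists f : {M : 'M['I_3]_(3, n) | @A3 n M} -> {w : {ffun 'I_n -> 'I_7} | @Swords n w},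
    bijective f.
Proof.
apply: card_eq_bij; rewrite !card_sig.
case: n hn => // n _.
by rewrite card_A3 card_Swords; case: (diff_count_hexagon n).
Qed.
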